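(* Let $X\subset\mathbb{R}$, $\delta>0$, and let $f,g:X\to\mathbb{R}^+$. Suppose the graph of $g$ intersects $N_\delta(g)$ boxes of the $\delta$-mesh, and that for every column $\mathbf{B}_i$ the graph of $f$ intersects at most $n_f$ boxes of $\mathbf{B}_i$. Then the graph of $f+g$ intersects at least $\frac{N_\delta(g)}{2n_f}$ boxes of the $\delta$-mesh.
   Context: The $\delta$-mesh consists of the disjoint boxes $B_i^j=[i\delta,(i+1)\delta)\times[j\delta,(j+1)\delta)$, $i,j\in\mathbb{Z}$; the $i$-th column is $\mathbf{B}_i=\bigcup_j B_i^j$. The graph of $h$ is $\{(x,h(x)):x\in X\}$, and $N_\delta(h)$ denotes the number of boxes of the $\delta$-mesh meeting the graph of $h$. *)

From HB Require Import structures.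
From mathcomp Require Import all_boot all_order all_algebra.
From mathcomp Require Import finmap.
From mathcomp Require Import boolp classical_sets cardinality reals.
Set Implicit Arguments. Unset Strict Implicit. Unset Printing Implicit Defensive.
Import Order.TTheory GRing.Theory Num.Theory.
Local Open Scope ring_scope.
Local Open Scope classical_set_scope.

Definition box (R : realType) (delta : R) (i j : int) : set (R * R) :=
  [set p | i%:~R * delta <= p.1 < (i + 1)%:~R * delta /\
           j%:~R * delta <= p.2 < (j + 1)%:~R * delta].

Definition graph (R : realType) (X : set R) (h : R -> R) : set (R * R) :=
  [set p | X p.1 /\ p.2 = h p.1].

Definition mesh_boxes (R : realType) (delta : R) (X : set R) (h : R -> R)
  : set (int * int) :=
  [set ij | box delta ij.1 ij.2 `&` graph X h !=set0].

(* N_delta(h): number of boxes meeting the graph (meaningful when finite). *)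
Definition Ndelta (R : realType) (delta : R) (X : set R) (h : R -> R) : nat :=
  #|` fset_set (mesh_boxes delta X h)|%fset.

(** Read every point by the mesh cell containing it.  Since
    [floor (u + v)] is [floor u + floor v] or one more, the cell of
    [(x, f x + g x)] lies in the same column as the cell [(i, j)] of
    [(x, g x)], at height [j + k] or [j + k + 1], where [(i, k)] is a cell
    met by the graph of [f].  Hence a cell met by [f + g] lies above at most
    [2 n_f] cells met by [g], while every cell met by [g] lies below some
    cell met by [f + g]; double counting gives [N(g) <= 2 n_f N(f + g)]. *)

From HB Require Import structures.
From mathcomp Require Import all_boot all_order all_algebra.
From mathcomp Require Import finmap.
From mathcomp Require Import boolp classical_sets cardinality reals.
From mathcomp Require Import ring lra.
Set Implicit Arguments. Unset Strict Implicit. Unset Printing Implicit Defensive.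
Import Order.TTheory GRing.Theory Num.Theory.
Local Open Scope ring_scope.
Local Open Scope classical_set_scope.

Lemma floorD_cases (R : realType) (u v : R) :
  Num.floor (u + v) = Num.floor u + Num.floor v \/
  Num.floor (u + v) = Num.floor u + Num.floor v + 1.
Proof.
have /andP[u_ge u_lt] := floor_itv u; have /andP[v_ge v_lt] := floor_itv v.
move: u_ge u_lt v_ge v_lt; rewrite !intrD => u_ge u_lt v_ge v_lt.
case: (ltP (u + v) (Num.floor u + Num.floor v + 1)%:~R) => uv.
  by left; apply: floor_def; rewrite !intrD; apply/andP; split; lra.
by right; apply: floor_def; move: uv; rewrite !intrD => uv; apply/andP; split; lra.
Qed.

Lemma card_bigfcup_le (I T : choiceType) (r : seq I) (F : I -> {fset T}) :
  (#|` \bigcup_(i <- r) F i| <= \sum_(i <- r) #|` F i|)%N%fset.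
Proof.
elim: r => [|i r IH]; first by rewrite !big_nil cardfs0.
rewrite !big_cons (leq_trans (leq_card_fsetU _ _)) // leq_add2l //.
Qed.

Lemma card_fset_le_fibers (T U : choiceType) (A : {fset T}) (C : {fset U})
    (r : T -> U -> Prop) (n : nat) :
  (forall a, a \in A -> exists2 c, c \in C & r a c) ->
  (forall c, c \in C -> #|` [fset a in A | `[< r a c >]]| <= n)%N%fset ->
  (#|` A| <= #|` C| * n)%N%fset.
Proof.
move=> cover fiber_le.
have A_sub : (A `<=` \bigcup_(c <- C) [fset a in A | `[< r a c >]])%fset.
  apply/fsubsetP => a aA; have [c cC rac] := cover a aA.
  by apply/bigfcupP; exists c; rewrite ?cC // !inE aA; apply/asboolP.
apply: (leq_trans (fsubset_leq_card A_sub)).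
apply: (leq_trans (card_bigfcup_le _ _)).
apply: (@leq_trans (\sum_(c <- C) n)).
  by rewrite big_seq [leqRHS]big_seq; apply: leq_sum.
by rewrite big_const_seq count_predT iter_addn_0 mulnC.
Qed.

Lemma bounded_fsubsets_finite (T : choiceType) (A : set T) (n : nat) :
  (forall S : {fset T}, (forall x, x \in S -> A x) -> (#|` S| <= n)%N%fset) ->
  finite_set A.
Proof.
move=> bounded; apply: contrapT => /(infinite_set_fset n.+1) [S SA Sn].
by have := bounded S SA; rewrite leqNgt Sn.
Qed.

Section Mesh.
Variables (R : realType) (delta : R) (X : set R).
Hypothesis delta_gt0 : 0 < delta.

Definition mesh_coord (u : R) : int := Num.floor (u / delta).

Definition mesh_cell (p : R * R) : int * int := (mesh_coord p.1, mesh_coord p.2).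

Definition column (h : R -> R) (i : int) : set int :=
  [set j | mesh_boxes delta X h (i, j)].

Lemma mesh_coordP (u : R) (n : int) :
  mesh_coord u = n <-> n%:~R * delta <= u < (n + 1)%:~R * delta.
Proof.
by split => [/eqP|u_n]; [|apply/eqP]; rewrite floor_eq ler_pdivlMr // ltr_pdivrMr.
Qed.

Lemma box_mesh_cell (i j : int) (p : R * R) :
  box delta i j p <-> mesh_cell p = (i, j).
Proof.
by rewrite /box /mesh_cell /= -!mesh_coordP; split => [[-> ->]|[-> ->]].
Qed.

Lemma mesh_boxesP (h : R -> R) (a : int * int) :
  mesh_boxes delta X h a <-> exists2 x, X x & mesh_cell (x, h x) = a.
Proof.
case: a => i j; split.
  case=> p [/box_mesh_cell cell [Xp hp]].
  by exists p.1; rewrite // -cell /mesh_cell hp.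
by case=> x Xx cell; exists (x, h x); split => //; apply/box_mesh_cell.
Qed.

Lemma mesh_coordD (u v : R) :
  mesh_coord (u + v) = mesh_coord u + mesh_coord v \/
  mesh_coord (u + v) = mesh_coord u + mesh_coord v + 1.
Proof. by rewrite /mesh_coord mulrDl; apply: floorD_cases. Qed.

Definition stacked (h1 h2 : R -> R) (a c : int * int) : Prop :=
  exists2 x, X x & mesh_cell (x, h1 x) = a /\ mesh_cell (x, h2 x) = c.

Lemma stacked_sum (f g : R -> R) (a c : int * int) :
  stacked g (f \+ g) a c ->
  exists2 k, column f a.1 k &
    c = (a.1, a.2 + k) \/ c = (a.1, a.2 + k + 1).
Proof.
case=> x Xx [<- <-] /=; exists (mesh_coord (f x)).
  by apply/mesh_boxesP; exists x.
by rewrite /mesh_cell /=; case: (mesh_coordD (f x) (g x)) => ->;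
  [left|right]; rewrite [mesh_coord (g x) + _]addrC.
Qed.

Section ColumnBound.
Variables (f g : R -> R) (n_f : nat).
Hypothesis column_le : forall (i : int) (S : {fset int}),
  (forall j, j \in S -> mesh_boxes delta X f (i, j)) -> (#|` S| <= n_f)%N%fset.

Lemma finite_column (i : int) : finite_set (column f i).
Proof. by apply: (@bounded_fsubsets_finite _ _ n_f); apply: column_le. Qed.

Lemma card_column_le (i : int) : (#|` fset_set (column f i)| <= n_f)%N%fset.
Proof.
by apply: (@column_le i) => j; rewrite in_fset_set ?inE //; exact: finite_column.
Qed.

Lemma finite_mesh_boxesD :
  finite_set (mesh_boxes delta X g) -> finite_set (mesh_boxes delta X (f \+ g)).
Proof.
move=> finG.
apply: (sub_finite_set _ (bigcup_finite (D := mesh_boxes delta X g)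
  (F := fun a => \bigcup_(k in column f a.1)
          [set (a.1, a.2 + k); (a.1, a.2 + k + 1)]) finG _)); last first.
  move=> a _; apply: bigcup_finite => [|k _]; first exact: finite_column.
  exact: finite_set2.
move=> c /mesh_boxesP [x Xx cell].
have stk : stacked g (f \+ g) (mesh_cell (x, g x)) c by exists x.
have [k col_k c_eq] := stacked_sum stk.
by exists (mesh_cell (x, g x)); [apply/mesh_boxesP; exists x|exists k].
Qed.

Lemma card_stacked_fiber_le (A : {fset int * int}) (c : int * int) :
  (#|` [fset a in A | `[< stacked g (f \+ g) a c >]]| <= 2 * n_f)%N%fset.
Proof.
case: c => i m; pose S := fset_set (column f i).
pose below (e : int) (k : int) := (i, m - k - e).
apply: (@leq_trans (#|` below 0 @` S|%fset + #|` below 1 @` S|%fset)%N).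
  apply: leq_trans (leq_card_fsetU _ _); apply: fsubset_leq_card.
  apply/fsubsetP => -[a1 a2]; rewrite !inE => /andP[_ /asboolP].
  move=> /stacked_sum[k /= col_k c_eq].
  have [i_eq m_eq] : a1 = i /\ (m = a2 + k \/ m = a2 + k + 1).
    by case: c_eq => -[-> ->]; split => //; [left|right].
  rewrite i_eq in col_k.
  have Sk : k \in S by rewrite in_fset_set; [rewrite inE | exact: (finite_column i)].
  case: m_eq => m_eq; apply/orP; [left|right]; apply/imfsetP; exists k => //;
    rewrite /below i_eq m_eq; congr (_, _); ring.
by rewrite mul2n -addnn; apply: leq_add; apply: leq_trans (leq_imfset_card _ _ _) _;
  apply: card_column_le.
Qed.

Lemma card_mesh_boxes_le :
  finite_set (mesh_boxes delta X g) ->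
  (Ndelta delta X g <= Ndelta delta X (f \+ g) * (2 * n_f))%N.
Proof.
move=> finG; have finFG := finite_mesh_boxesD finG.
apply: (card_fset_le_fibers (r := stacked g (f \+ g))) => [a|c _].
  rewrite in_fset_set // inE => /mesh_boxesP [x Xx cell].
  exists (mesh_cell (x, (f \+ g) x)); last by exists x.
  by rewrite in_fset_set // inE; apply/mesh_boxesP; exists x.
exact: card_stacked_fiber_le.
Qed.

End ColumnBound.
End Mesh.

Theorem lemma3 (R : realType) (X : set R) (delta : R) (f g : R -> R) (n_f : nat) :
  0 < delta ->
  (forall x, X x -> 0 < f x) ->
  (forall x, X x -> 0 < g x) ->
  finite_set (mesh_boxes delta X g) ->
  (forall (i : int) (S : {fset int}),
     (forall j, j \in S -> mesh_boxes delta X f (i, j)) -> (#|` S| <= n_f)%N) ->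
  finite_set (mesh_boxes delta X (f \+ g)) /\
  (Ndelta delta X g)%:R / (2 * n_f)%:R <= (Ndelta delta X (f \+ g))%:R :> R.
Proof.
move=> delta_gt0 _ _ finG column_le.
split; first exact: finite_mesh_boxesD column_le finG.
have card_le := card_mesh_boxes_le delta_gt0 column_le finG.
(* For n_f = 0 the left-hand side is N(g) / 0 = 0. *)
case: n_f {column_le} card_le => [|n card_le]; first by rewrite invr0 mulr0.
by rewrite ler_pdivrMr ?ltr0n ?muln_gt0 // -natrM ler_nat.
Qed.
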